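(* Let $k\ge 2$ be an integer, $0<\bar r\le k$ a residue, and $\mathcal{A}$ the alphabet of all positive integers congruent to $\bar r \pmod k$. If for all $n\ge 1$ we have $\mathfrak{D}_{\mathcal{A}} \bmod k^n=\mathbb{Z}/k^n\mathbb{Z}$, then $\mathcal{A}$ has no local obstructions.
   Context: For $a\in\mathbb{N}$ let $\gamma_a=\begin{pmatrix}0&1\\1&a\end{pmatrix}$ and let $\mathcal{G}_{\mathcal{A}}$ be the semigroup generated by $\gamma_a$, $a\in\mathcal{A}$ (products of one or more generators). $\mathfrak{D}_{\mathcal{A}}=\{\langle \gamma e_2,e_2\rangle:\gamma\in\mathcal{G}_{\mathcal{A}}\}$ is the set of lower-right entries of elements of $\mathcal{G}_{\mathcal{A}}$. An integer $d$ is admissible if for every $q\in\mathbb{N}$, $d \bmod q$ lies in $\mathfrak{D}_{\mathcal{A}}\bmod q$; $\mathcal{A}$ has no local obstructions if every integer is admissible. *)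

From mathcomp Require Import all_boot all_order all_algebra.
Set Implicit Arguments. Unset Strict Implicit. Unset Printing Implicit Defensive.
Import Order.TTheory GRing.Theory Num.Theory.
Local Open Scope ring_scope.

(* gamma_a = [[0,1],[1,a]] as an integer 2x2 matrix *)
Definition gamma (a : nat) : 'M[int]_2 :=
  \matrix_(i < 2, j < 2)
    (if (val i == 0%N) && (val j == 0%N) then 0
     else if (val i == 1%N) && (val j == 1%N) then (a%:Z) else 1).

Definition word_prod (s : seq nat) : 'M[int]_2 :=
  foldr (fun a M => gamma a *m M) 1%:M s.

Definition in_semigroup (A : pred nat) (g : 'M[int]_2) : Prop :=
  exists s : seq nat, s != [::] /\ all A s /\ g = word_prod s.

Definition DA (A : pred nat) (d : int) : Prop :=
  exists g, in_semigroup A g /\ g ord_max ord_max = d.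

Definition admissible (A : pred nat) (d : int) : Prop :=
  forall q : nat, (0 < q)%N ->
    exists x, DA A x /\ (x = d %[mod q%:Z])%Z.

Definition no_local_obstructions (A : pred nat) : Prop :=
  forall d : int, admissible A d.

Definition alphabet_mod (k r : nat) : pred nat :=
  fun a => (0 < a)%N && (a == r %[mod k])%N.

(** The hypothesis settles every congruence modulo a power of [k], so it
    remains to handle a modulus [q2] coprime to [k].  Fix a word [a_1 ... a_m]
    whose lower-right entry is [d] modulo [M = k^(N+1)].  Letters may be
    changed freely within their class modulo [M]: this keeps them in the
    alphabet and keeps the entry modulo [M].  By the Chinese remainder theorem
    the class modulo [q2] of each new letter is then arbitrary, and since the
    lower-right entry of [a :: w] is [ur w + a * lr w], choosing the letters
    from the right makes the entry congruent to [d] modulo [q2] as well. *)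

From mathcomp Require Import all_boot all_order all_algebra.
Import GRing.Theory Num.Theory.
Local Open Scope ring_scope.

Definition word_ur (s : seq nat) : int := word_prod s 0 ord_max.
Definition word_lr (s : seq nat) : int := word_prod s ord_max ord_max.

Lemma word_ur_nil : word_ur [::] = 0.
Proof. by rewrite /word_ur /= !mxE. Qed.

Lemma word_lr_nil : word_lr [::] = 1.
Proof. by rewrite /word_lr /= !mxE. Qed.

Lemma word_prod_cons_entry a s (j : 'I_2) :
  word_prod (a :: s) 0 j = word_prod s ord_max j /\
  word_prod (a :: s) ord_max j = word_prod s 0 j + a%:Z * word_prod s ord_max j.
Proof.
rewrite /= !mxE !big_ord_recl !big_ord0 /gamma !mxE /=.
have -> : (lift ord0 ord0 : 'I_2) = ord_max by apply/val_inj.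
by rewrite !addr0 mul0r add0r !mul1r.
Qed.

Lemma word_ur_cons a s : word_ur (a :: s) = word_lr s.
Proof. exact: (word_prod_cons_entry a s ord_max).1. Qed.

Lemma word_lr_cons a s : word_lr (a :: s) = word_ur s + a%:Z * word_lr s.
Proof. exact: (word_prod_cons_entry a s ord_max).2. Qed.

Lemma DAP (A : pred nat) (x : int) :
  DA A x <-> exists2 s, (s != [::]) && all A s & x = word_lr s.
Proof.
split=> [[_ [[s [s0 [sA ->]]] <-]] | [s /andP[s0 sA] ->]].
  by exists s; rewrite ?s0.
by exists (word_prod s); split=> //; exists s.
Qed.

Lemma eqz_mod_dvdm (d : int) {m x y : int} :
  (x = y %[mod m])%Z -> (d %| m)%Z -> (x = y %[mod d])%Z.
Proof.
move=> /eqP + dm; rewrite eqz_mod_dvd => /(dvdz_trans dm).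
by rewrite -eqz_mod_dvd => /eqP.
Qed.

Lemma word_prod_congr {M : nat} {s s' : seq nat} :
  all2 (fun x y => x == y %[mod M]) s s' ->
  (word_ur s = word_ur s' %[mod M])%Z /\ (word_lr s = word_lr s' %[mod M])%Z.
Proof.
elim: s s' => [|a s IH] [|b s'] //= /andP[/eqP ab /IH[ur_ss' lr_ss']].
have ab' : (a%:Z = b%:Z %[mod M])%Z by rewrite !modz_nat ab.
rewrite !word_ur_cons !word_lr_cons; split=> //.
by rewrite -modzDm -modzMm ur_ss' lr_ss' ab' modzMm modzDm.
Qed.

Lemma chinese_pos {m n : nat} (a : nat) (z : int) : coprime m n -> (0 < m * n)%N ->
  exists2 a' : nat, (0 < a')%N &
    (a' = a %[mod m])%N /\ (a'%:Z = z %[mod n])%Z.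
Proof.
move=> co_mn mn_gt0.
pose x := zchinese m n a z.
(* the CRT solution, shifted into the positive window ]mn, 2mn] *)
pose y := (x %% (m * n)%N)%Z + (m * n)%N.
have y_gt0 : 0 < y by rewrite ltr_wpDl ?modz_ge0 ?lt0r_neq0 // ltz_nat.
have y_x : (y = x %[mod (m * n)%N])%Z by rewrite modzDr modz_mod.
exists `|y|%N; first by rewrite absz_gt0 lt0r_neq0.
rewrite gtz0_abs //; split.
  apply/eqP; rewrite -eqz_nat -!modz_nat.
  by rewrite gtz0_abs // (eqz_mod_dvdm _ y_x) ?zchinese_modl ?PoszM ?dvdz_mulr.
by rewrite (eqz_mod_dvdm _ y_x) ?zchinese_modr ?PoszM ?dvdz_mull.
Qed.

Lemma word_lr_lift {M q : nat} {s : seq nat} (z : int) :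
  coprime M q -> (0 < M * q)%N -> s != [::] ->
  exists s', [/\ all2 (fun x y => x == y %[mod M]) s' s,
    all (fun x => 0 < x)%N s' & (word_lr s' = z %[mod q])%Z].
Proof.
move=> co_Mq Mq_gt0; elim: s z => [//|a s IH] z _.
case: s IH => [|b s] IH.
  have [a' a'_gt0 [a'_a a'_z]] := chinese_pos a z co_Mq Mq_gt0.
  exists [:: a']; rewrite /= a'_gt0 a'_a eqxx; split=> //.
  by rewrite word_lr_cons word_ur_nil word_lr_nil add0r mulr1.
have [t [t_bs t_gt0 t_1]] := IH 1 isT.
have [a' a'_gt0 [a'_a a'_z]] := chinese_pos a (z - word_ur t) co_Mq Mq_gt0.
exists (a' :: t); rewrite /= a'_gt0 a'_a eqxx t_bs t_gt0; split=> //.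
by rewrite word_lr_cons -modzDmr -modzMm t_1 a'_z modzMm mulr1 modzDmr addrC subrK.
Qed.

Lemma dvdn_expn_mul_coprime {k q : nat} : (0 < k)%N -> (0 < q)%N ->
  exists N q2, [/\ (0 < q2)%N, coprime k q2 & (q %| k ^ N * q2)%N].
Proof.
move=> k_gt0; elim/ltn_ind: q => q IH q_gt0.
have [co_kq | nco_kq] := boolP (coprime k q).
  by exists 0%N, q; rewrite expn0 mul1n.
have g_gt1 : (1 < gcdn k q)%N.
  rewrite ltn_neqAle eq_sym gcdn_gt0 k_gt0 andbT; exact: nco_kq.
have g_q : (gcdn k q %| q)%N := dvdn_gcdr k q.
have q'_gt0 : (0 < q %/ gcdn k q)%N.
  by rewrite divn_gt0 ?gcdn_gt0 ?k_gt0 // dvdn_leq.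
have [N [q2 [q2_gt0 co_kq2 q'_dvd]]] := IH _ (ltn_Pdiv g_gt1 q_gt0) q'_gt0.
exists N.+1, q2; split=> //.
rewrite -(divnK g_q) expnS -mulnA mulnC.
by rewrite dvdn_mul // dvdn_gcdl.
Qed.

Lemma all_alphabet_mod_congr {k r M : nat} {s s' : seq nat} : (k %| M)%N ->
  all (alphabet_mod k r) s -> all2 (fun x y => x == y %[mod M]) s' s ->
  all (fun x => 0 < x)%N s' -> all (alphabet_mod k r) s'.
Proof.
move=> k_M; elim: s' s => [|a' s' IH] [|a s] //=.
move=> /andP[/andP[_ /eqP a_r] sA] /andP[/eqP a'_a s'_s] /andP[a'_gt0 s'_gt0].
rewrite (IH s) // andbT /alphabet_mod a'_gt0 -a_r /=; apply/eqP.
by rewrite -(modn_dvdm a' k_M) a'_a modn_dvdm.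
Qed.

Theorem lemmaB8 (k rbar : nat) :
  (2 <= k)%N -> (0 < rbar <= k)%N ->
  (forall n : nat, (1 <= n)%N ->
     forall y : int, exists x, DA (alphabet_mod k rbar) x /\
                              (x = y %[mod (k ^ n)%N%:Z])%Z) ->
  no_local_obstructions (alphabet_mod k rbar).
Proof.
move=> k_ge2 _ hyp d q q_gt0.
have k_gt0 : (0 < k)%N by apply: ltnW.
have [N [q2 [q2_gt0 co_kq2 q_dvd]]] := dvdn_expn_mul_coprime k_gt0 q_gt0.
pose M := (k ^ N.+1)%N.
have co_Mq2 : coprime M q2 by rewrite coprimeXl.
have Mq2_gt0 : (0 < M * q2)%N by rewrite muln_gt0 expn_gt0 k_gt0.
have [_ [/DAP[s /andP[s_nil sA] ->] lr_s]] := hyp N.+1 isT d.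
have [s' [s'_s s'_gt0 lr_s']] := word_lr_lift d co_Mq2 Mq2_gt0 s_nil.
exists (word_lr s'); split.
  have s'_nil : s' != [::].
    by case: s' s'_s {s'_gt0 lr_s'} => //; case: s s_nil {sA lr_s}.
  apply/DAP; exists s' => //.
  by rewrite s'_nil (all_alphabet_mod_congr _ sA s'_s) ?dvdn_exp.
apply: (@eqz_mod_dvdm _ (M * q2)%N); last first.
  by rewrite dvdzE /= (dvdn_trans q_dvd) // dvdn_mul // /M expnS dvdn_mull.
apply/eqP; rewrite PoszM zchinese_remainder //.
by rewrite (word_prod_congr s'_s).2 lr_s lr_s' !eqxx.
Qed.
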